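(* (a) The knot signature functions $\{\sigma_\omega\}_{\omega\in S}$ form a linearly independent set of real-valued functions on the set of all knots in $S^3$. (b) The averaged signature functions $\{\sigma^*_\omega\}_{\omega\in S}$ form a linearly independent set of homomorphisms $\mathcal{G}\to\mathbb{R}$ on the algebraic concordance group $\mathcal{G}$ (and hence also on the knot concordance group $\mathcal{C}$).
   Context: A Seifert matrix is a square integral matrix $V$ with $\det(V-V^T)=\pm1$; for a unit complex number $\omega$, $\sigma_\omega(V)$ is the signature of $(1-\omega)V+(1-\bar\omega)V^T$, and for a knot $K$, $\sigma_\omega(K)=\sigma_\omega(V_K)$ for any Seifert matrix $V_K$ of $K$. $S$ is the set of unit complex numbers with positive imaginary part. A Seifert matrix of size $2g$ is metabolic if the form $x^TVy$ vanishes on some rank-$g$ direct summand of $\mathbb{Z}^{2g}$. The algebraic concordance group $\mathcal{G}$ is the set of Seifert matrices modulo the relation $V_1\sim V_2$ iff $V_1\oplus(-V_2)$ is metabolic, with group operation induced by direct sum. The averaged signature is $\sigma^*_{e^{i\theta_0}}(V)=\frac12\big(\lim_{\theta\to\theta_0^+}\sigma_{e^{i\theta}}(V)+\lim_{\theta\to\theta_0^-}\sigma_{e^{i\theta}}(V)\big)$, which descends to a homomorphism on $\mathcal{G}$. The knot concordance group $\mathcal{C}$ maps onto $\mathcal{G}$ via $K\mapsto V_K$. *)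

From HB Require Import structures.
From mathcomp Require Import all_boot all_order all_algebra.
From mathcomp Require Import complex.
From mathcomp Require Import all_classical all_reals topology normedtype trigo.

Set Implicit Arguments.
Unset Strict Implicit.
Unset Printing Implicit Defensive.

Import Order.TTheory GRing.Theory Num.Theory.
Import numFieldNormedType.Exports.
Local Open Scope classical_set_scope.
Local Open Scope ring_scope.

Definition is_seifert (n : nat) (V : 'M[int]_n) : Prop :=
  \det (V - V^T) = 1 \/ \det (V - V^T) = -1.

Section Sig.
Variable R : realType.
Local Notation C := (R[i]).

(* The
   eigenvalues are the diagonal entries of the spectral (Schur) decomposition
   A = P^-1 diag(d) P provided by mathcomp's spectral.v. *)
Definition hsignature (n : nat) (A : 'M[C]_n) : int :=
  (#|[pred i : 'I_n | 0 < spectral_diag A 0 i]|%:Z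
   - #|[pred i : 'I_n | spectral_diag A 0 i < 0]|%:Z)%R.

Definition in_S (w : C) : Prop := `|w| = 1 /\ 0 < 'Im w.

Definition sigma_omega (w : C) (n : nat) (V : 'M[int]_n) : int :=
  hsignature ((1 - w) *: map_mx (fun z : int => z%:~R : C) V
              + (1 - w^*) *: map_mx (fun z : int => z%:~R : C) V^T).

Definition expi (t : R) : C := Complex (cos t) (sin t).

Definition sigma_theta (n : nat) (V : 'M[int]_n) (t : R) : R :=
  (sigma_omega (expi t) V)%:~R.

Definition avg_sigma (t0 : R) (n : nat) (V : 'M[int]_n) : R :=
  (lim (sigma_theta V @ t0^'+) + lim (sigma_theta V @ t0^'-)) / 2.

End Sig.

(* Write s = |1 - w|^2 = 2 - 2 Re w for w on the unit circle.  For integers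
   p > 0 and h, the 4 x 4 Seifert matrix V(p, h) has a Hermitian form
   (1 - w) V + (1 - conj w) V^T congruent to diag(s p, s p, -1/p, l(s)) with
   l(s) = p s^2 - 2 h s - 1/p, so by Sylvester's law of inertia its signature
   is 2 or 0 according to the sign of l(s).  The polynomial l changes sign
   exactly once on (0, oo), at (h + sqrt (h^2 + 1)) / p, and these roots are
   dense.  Given finitely many distinct w with a vanishing linear combination
   of signatures, take the w with nonzero coefficient and largest s, and a root
   separating it from the others: on V(p, h) only its signature is nonzero, so
   its coefficient vanishes.  Averaged signatures agree with signatures on
   V(p, h) away from the roots, where the signature is locally constant. *)

From HB Require Import structures.
From mathcomp Require Import all_boot all_order all_algebra.
From mathcomp Require Import complex.
From mathcomp Require Import all_classical all_reals topology normedtype trigo.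
From mathcomp Require Import zify ring lra.
Import Order.TTheory GRing.Theory Num.Theory.
Import numFieldNormedType.Exports.

Set Implicit Arguments.
Unset Strict Implicit.
Unset Printing Implicit Defensive.
Local Open Scope ring_scope.
Local Open Scope sesquilinear_scope.

(** * Sylvester's law of inertia *)

Lemma capmx_neq0 (F : fieldType) m1 m2 n (A : 'M[F]_(m1, n)) (B : 'M_(m2, n)) :
  (n < \rank A + \rank B)%N -> (A :&: B)%MS != 0.
Proof.
rewrite -mxrank_eq0 -lt0n.
by have := mxrank_sum_cap A B; have := rank_leq_col (A + B)%MS; lia.
Qed.

Definition diag_indicator (F : fieldType) n (P : pred 'I_n) : 'M[F]_n :=
  diag_mx (\row_i (P i)%:R).

Lemma rank_diag_indicator (F : fieldType) n (P : pred 'I_n) :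
  \rank (diag_indicator F P) = #|P|.
Proof.
have -> : (diag_indicator F P :=: \sum_(i | P i) <<delta_mx 0 i : 'rV[F]_n>>)%MS.
  apply/eqmxP/andP; split.
    apply/row_subP => i; rewrite row_diag_mx mxE.
    case: (boolP (P i)) => Pi; last by rewrite scale0r sub0mx.
    by rewrite scale1r (sumsmx_sup i) // genmxE.
  apply/sumsmx_subP => i Pi; rewrite genmxE; apply: (eq_row_sub i).
  by rewrite row_diag_mx mxE Pi scale1r.
have /mxdirectP -> := @mxdirect_delta F _ P n id (in2W (@inj_id _)).
by rewrite /= -sum1_card; apply: eq_bigr => i _; rewrite mxrank_gen mxrank_delta.
Qed.

Section Inertia.
Variable C : numClosedFieldType.

Definition num_pos n (d : 'rV[C]_n) := #|[pred i | 0 < d 0 i]|.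
Definition num_neg n (d : 'rV[C]_n) := #|[pred i | d 0 i < 0]|.
Definition diag_signature n (d : 'rV[C]_n) : int := (num_pos d)%:Z - (num_neg d)%:Z.

Lemma trmxC_mul m n p (A : 'M[C]_(m, n)) (B : 'M[C]_(n, p)) :
  (A *m B)^t* = B^t* *m A^t*.
Proof. by rewrite trmx_mul map_mxM. Qed.

Lemma trmxC_diag n (d : 'rV[C]_n) :
  (forall j, d 0 j \is Num.real) -> (diag_mx d)^t* = diag_mx d.
Proof.
move=> real_d; rewrite tr_diag_mx map_diag_mx realmxC //.
by apply/mxOverP => i j; rewrite ord1.
Qed.

Lemma hform_congr_diag n (N : 'M[C]_n) (F v : 'rV[C]_n) :
  (v *m (N^t* *m diag_mx F *m N) *m v^t*) 0 0
  = \sum_j F 0 j * `|(v *m N^t*) 0 j| ^+ 2.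
Proof.
rewrite -!mulmxA [v *m _]mulmxA; have -> : N *m v^t* = (v *m N^t*)^t*.
  by rewrite trmxC_mul trmxCK.
rewrite mulmxA mxE; apply: eq_bigr => j _.
by rewrite mul_mx_diag !mxE normCK mulrAC mulrC.
Qed.

Lemma diag_hform_gt0 n (F w : 'rV[C]_n) : w != 0 ->
  (forall j, w 0 j != 0 -> 0 < F 0 j) -> 0 < \sum_j F 0 j * `|w 0 j| ^+ 2.
Proof.
move=> w_neq0 F_gt0; have [j wj_neq0] : exists j, w 0 j != 0.
  apply/existsP; apply: contraR w_neq0 => /existsPn w_eq0.
  by apply/eqP/rowP => j; rewrite mxE; apply/eqP/negPn/w_eq0.
rewrite (bigD1 j) //= ltr_pwDl ?mulr_gt0 ?exprn_gt0 ?normr_gt0 ?F_gt0 //.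
apply: sumr_ge0 => k _; have [->|wk_neq0] := eqVneq (w 0 k) 0.
  by rewrite normr0 expr0n mulr0.
by rewrite mulr_ge0 ?exprn_ge0 // ltW ?F_gt0.
Qed.

Lemma diag_hform_le0 n (F w : 'rV[C]_n) :
  (forall j, w 0 j != 0 -> F 0 j <= 0) -> \sum_j F 0 j * `|w 0 j| ^+ 2 <= 0.
Proof.
move=> F_le0; apply: sumr_le0 => k _; have [->|wk_neq0] := eqVneq (w 0 k) 0.
  by rewrite normr0 expr0n mulr0.
by rewrite mulr_le0_ge0 ?exprn_ge0 ?F_le0.
Qed.

Lemma diag_indicator_support n (P : pred 'I_n) (a : 'rV[C]_n) j :
  (a *m diag_indicator C P) 0 j != 0 -> P j.
Proof. by rewrite mul_mx_diag !mxE; case: (P j); rewrite ?mulr0 ?eqxx. Qed.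

(* X is the subspace where the form is positive definite in the second
   diagonalisation, Y the one where it is negative semidefinite in the first;
   their dimensions add up to more than n, so they meet. *)
Lemma num_pos_congr_le n (N1 N2 : 'M[C]_n) (F1 F2 : 'rV[C]_n) :
  N1 \in unitmx -> N2 \in unitmx -> (forall j, F1 0 j \is Num.real) ->
  N1^t* *m diag_mx F1 *m N1 = N2^t* *m diag_mx F2 *m N2 ->
  (num_pos F2 <= num_pos F1)%N.
Proof.
move=> uN1 uN2 real_F1 congrF; rewrite leqNgt; apply/negP => ltF12.
pose P2 : pred 'I_n := fun i => 0 < F2 0 i.
pose P1 : pred 'I_n := fun i => ~~ (0 < F1 0 i).
pose X := diag_indicator C P2 *m invmx (N2^t*).
pose Y := diag_indicator C P1 *m invmx (N1^t*).
have uN1t : N1^t* \in unitmx by rewrite map_unitmx unitmx_tr.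
have uN2t : N2^t* \in unitmx by rewrite map_unitmx unitmx_tr.
have rankX : \rank X = num_pos F2.
  rewrite mxrankMfree ?rank_diag_indicator; last by rewrite row_free_unit unitmx_inv.
  by apply: eq_card => i; rewrite !inE.
have rankY : (\rank Y + num_pos F1)%N = n.
  rewrite mxrankMfree ?rank_diag_indicator; last by rewrite row_free_unit unitmx_inv.
  rewrite addnC -[RHS](card_ord n) -(cardC [pred i | 0 < F1 0 i]).
  by congr (_ + _)%N; apply: eq_card => i; rewrite !inE.
have /rowV0Pn[v vXY v_neq0] : (X :&: Y)%MS != 0.
  by apply: capmx_neq0; rewrite rankX; lia.
move: vXY; rewrite sub_capmx => /andP[/submxP[a vX] /submxP[b vY]].
pose q := (v *m (N1^t* *m diag_mx F1 *m N1) *m v^t*) 0 0.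
have q_gt0 : 0 < q.
  rewrite /q congrF hform_congr_diag.
  have -> : v *m N2^t* = a *m diag_indicator C P2 by rewrite vX mulmxA mulmxKV.
  apply: diag_hform_gt0 => [|j /diag_indicator_support //].
  by apply: contra v_neq0 => /eqP a0; rewrite vX mulmxA a0 mul0mx.
suff : q <= 0 by move/(lt_le_trans q_gt0); rewrite ltxx.
rewrite /q hform_congr_diag.
have -> : v *m N1^t* = b *m diag_indicator C P1 by rewrite vY mulmxA mulmxKV.
apply: diag_hform_le0 => j /diag_indicator_support.
by rewrite /P1 real_ltNge ?real0 ?negbK.
Qed.

Lemma num_posN n (d : 'rV[C]_n) : num_pos (- d) = num_neg d.
Proof. by apply: eq_card => i; rewrite !inE mxE oppr_gt0. Qed.

Lemma num_pos_neg_le n (d : 'rV[C]_n) : (num_pos d + num_neg d <= n)%N.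
Proof.
rewrite -cardUI -[X in (_ <= X)%N](card_ord n) -[X in (_ <= X)%N]addn0.
rewrite leq_add ?max_card // leqn0; apply/eqP/eq_card0 => i.
by rewrite !inE lt_asym.
Qed.

Lemma num_pos_neg_eq n (d : 'rV[C]_n) :
  (forall j, d 0 j \is Num.real) -> (forall j, d 0 j != 0) ->
  (num_pos d + num_neg d)%N = n.
Proof.
move=> real_d d_neq0; rewrite -[RHS](card_ord n) -(cardC [pred i | 0 < d 0 i]).
congr (_ + _)%N; apply: eq_card => i; rewrite !inE.
by rewrite [0 < _]real_ltNge ?real0 // negbK le_eqVlt (negPf (d_neq0 i)).
Qed.

Theorem inertia_congr_diag n (A M : 'M[C]_n) (E : 'rV[C]_n) :
  M \in unitmx -> (forall j, E 0 j \is Num.real) -> (forall j, E 0 j != 0) ->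
  A = M^t* *m diag_mx E *m M ->
  diag_signature (spectral_diag A) = diag_signature E.
Proof.
move=> uM real_E E_neq0 defA; set D := spectral_diag A.
have hermA : A \is hermsymmx.
  apply/is_hermitianmxP; rewrite expr0 scale1r defA !trmxC_mul trmxCK.
  by rewrite trmxC_diag // mulmxA.
have real_D j : D 0 j \is Num.real.
  by have /mxOverP := hermitian_spectral_diag_real hermA; apply.
have defAD : A = (spectralmx A)^t* *m diag_mx D *m spectralmx A.
  have /orthomx_spectralP {1}-> := hermitian_normalmx hermA.
  by rewrite invmx_unitary // spectral_unitarymx.
have uS := spectral_unit A.
have pos_le : (num_pos E <= num_pos D)%N.
  by apply: (num_pos_congr_le uS uM real_D); rewrite -defAD.
have neg_le : (num_neg E <= num_neg D)%N.
  rewrite -!num_posN; apply: (num_pos_congr_le uS uM).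
    by move=> j; rewrite mxE rpredN.
  by rewrite !raddfN /= !mulNmx -defAD -defA.
have := num_pos_neg_le D; have := num_pos_neg_eq real_E E_neq0.
by rewrite /diag_signature; lia.
Qed.

End Inertia.

(** * The test Seifert matrices *)

Definition test_seifert (p h : int) : 'M[int]_4 :=
  \matrix_(i, j)
    match nat_of_ord i, nat_of_ord j with
    | 0, 0 | 1, 1 => p
    | 0, 2 | 1, 3 | 2, 3 | 3, 2 => 1
    | 3, 3 => - (2 * h)
    | _, _ => 0
    end.

Ltac case_ord4 i := case: i => [[|[|[|[|?]]]] ?] //.

Lemma test_seifert_skew_sqr p h :
  let J := test_seifert p h - (test_seifert p h)^T in J *m J = (-1)%:M.
Proof.
apply/matrixP => i j; rewrite !mxE !big_ord_recl big_ord0 !mxE.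
by case_ord4 i; case_ord4 j; rewrite /=; ring.
Qed.

Lemma test_seifert_is_seifert p h : is_seifert (test_seifert p h).
Proof.
have := congr1 determinant (test_seifert_skew_sqr p h).
rewrite det_mulmx det_scalar -expr2 (_ : (-1) ^+ 4 = 1 :> int) // => /eqP.
by rewrite sqrf_eq1 => /orP[] /eqP; [left | right].
Qed.

Definition last_pivot (F : fieldType) (p h : int) (s : F) : F :=
  p%:~R * s ^+ 2 - 2 * h%:~R * s - (p%:~R)^-1.

Lemma rmorph_last_pivot (F K : fieldType) (f : {rmorphism F -> K}) p h s :
  f (last_pivot p h s) = last_pivot p h (f s).
Proof.
by rewrite /last_pivot !(rmorphB, rmorphM, rmorphXn, fmorphV, rmorph_int, rmorph_nat).
Qed.

Section TestForm.
Variables (C : numClosedFieldType) (p h : int) (u : C).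
Let s := u + u^*.
Let P : C := p%:~R.

(* Gaussian elimination of u V + u^* V^T for V := test_seifert p h. *)
Definition test_factor : 'M[C]_4 :=
  \matrix_(i, j)
    match nat_of_ord i, nat_of_ord j with
    | 0, 0 | 1, 1 | 2, 2 | 3, 3 => 1
    | 0, 2 | 1, 3 => u / (s * P)
    | 2, 3 => - (P * s)
    | _, _ => 0
    end.

Definition test_pivots : 'rV[C]_4 :=
  \row_j match nat_of_ord j with
         | 0 | 1 => s * P
         | 2 => - P^-1
         | _ => last_pivot p h s
         end.

Lemma test_factor_unit : test_factor \in unitmx.
Proof.
rewrite unitmxE -det_tr det_trig.
  by rewrite !big_ord_recl big_ord0 !mxE /= !mulr1 unitr1.
by apply/is_trig_mxP => i j; rewrite !mxE; case_ord4 i; case_ord4 j.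
Qed.

(* This holds for u = 1 - w with |w| = 1, and then s = |1 - w|^2. *)
Hypotheses (u_neq0 : u != 0) (uu : u * u^* = s).

Lemma test_form_LDL : P != 0 ->
  u *: map_mx (fun z : int => z%:~R : C) (test_seifert p h)
  + u^* *: map_mx (fun z : int => z%:~R : C) (test_seifert p h)^T
  = test_factor^t* *m diag_mx test_pivots *m test_factor.
Proof.
move=> P_neq0; have s_real : s^* = s by rewrite /s rmorphD /= conjCK addrC.
have P_real : P^* = P by rewrite /P conj_Creal ?realz.
have uu1 : u^* * (u - 1) = u by rewrite mulrBr mulr1 mulrC uu /s addrK.
have u1_neq0 : u - 1 != 0.
  by apply: contraNneq u_neq0 => u1_eq0; rewrite -uu1 u1_eq0 mulr0.
have conj_u : u^* = u / (u - 1) by apply: (mulIf u1_neq0); rewrite uu1 divfK.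
have uu1_neq0 : u * (u - 1) + u != 0 by rewrite mulrBr mulr1 subrK mulf_neq0.
apply/matrixP => i j; rewrite mul_mx_diag !mxE !big_ord_recl big_ord0 !mxE.
case_ord4 i; case_ord4 j;
  rewrite /= ?(rmorph0, rmorph1, rmorphN, rmorphM, fmorphV) /= ?s_real ?P_real.
all: rewrite ?intrN ?intrM /last_pivot -/P /s conj_u; field.
all: by rewrite ?P_neq0 ?u1_neq0 //=; exact: uu1_neq0.
Qed.

Lemma test_form_signature : (0 < p)%R -> last_pivot p h s != 0 ->
  diag_signature (spectral_diag
    (u *: map_mx (fun z : int => z%:~R : C) (test_seifert p h)
     + u^* *: map_mx (fun z : int => z%:~R : C) (test_seifert p h)^T))
  = if 0 < last_pivot p h s then 2 else 0.
Proof.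
move=> p_gt0 l_neq0; have P_gt0 : 0 < P by rewrite ltr0z.
have s_gt0 : 0 < s by rewrite -uu mul_conjC_gt0.
have l_real : last_pivot p h s \is Num.real.
  by rewrite /last_pivot ?(rpredB, rpredM, rpredV, rpredX, realz, realn, gtr0_real s_gt0).
have sP_gt0 : 0 < s * P by rewrite mulr_gt0.
have iP_lt0 : - P^-1 < 0 by rewrite oppr_lt0 invr_gt0.
rewrite (inertia_congr_diag test_factor_unit _ _ (test_form_LDL (lt0r_neq0 P_gt0))).
- rewrite /diag_signature /num_pos /num_neg -!sum1_card big_mkcond.
  rewrite [in X in _ - X]big_mkcond !big_ord_recl !big_ord0 !inE !mxE /=.
  rewrite sP_gt0 iP_lt0 (lt_gtF sP_gt0) (lt_gtF iP_lt0).
  by move: l_neq0; rewrite real_neqr_lt ?real0 // => /orP[] l_sign;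
    rewrite l_sign (lt_gtF l_sign).
- move=> j; rewrite mxE; case_ord4 j.
  + exact: gtr0_real.
  + exact: gtr0_real.
  + exact: ltr0_real.
- move=> j; rewrite mxE; case_ord4 j.
  + exact: lt0r_neq0.
  + exact: lt0r_neq0.
  + exact: ltr0_neq0.
Qed.

End TestForm.

Section PivotSign.
Variables (R : rcfType) (p h : int).

Definition pivot_root : R := h%:~R + Num.sqrt (h%:~R ^+ 2 + 1).

Let P : R := p%:~R.
Let q : R := Num.sqrt (h%:~R ^+ 2 + 1).

Lemma last_pivot_factor s :
  P != 0 -> P * last_pivot p h s = (P * s - pivot_root) * (P * s - (h%:~R - q)).
Proof.
move=> P_neq0; have q2 : 1 = q ^+ 2 - h%:~R ^+ 2.
  by rewrite sqr_sqrtr ?addr_ge0 ?sqr_ge0 // addrC addKr.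
rewrite /last_pivot /pivot_root -/P -/q mulrBr mulfV // [X in _ - X = _]q2.
by ring.
Qed.

Let q_bounds : - q < h%:~R < q.
Proof. by rewrite -ltr_norml -sqrtr_sqr ltr_sqrt ?ltrDl ?ltr01 // ltr_wpDl ?sqr_ge0. Qed.

Lemma pivot_root_gt0 : 0 < pivot_root.
Proof. by have /andP[] := q_bounds; rewrite /pivot_root -/q; lra. Qed.

Lemma pivot_root_gt_double : 2 * h%:~R < pivot_root.
Proof. by have /andP[] := q_bounds; rewrite /pivot_root -/q; lra. Qed.

Hypothesis p_gt0 : (0 < p)%R.
Let P_gt0 : 0 < P. Proof. by rewrite ltr0z. Qed.

Let other_factor_gt0 s : 0 < s -> 0 < P * s - (h%:~R - q).
Proof.
move=> s_gt0; have /andP[_ hq] := q_bounds; have : 0 < P * s by rewrite mulr_gt0.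
lra.
Qed.

Lemma last_pivot_lt0 s : 0 < s -> s < pivot_root / P -> last_pivot p h s < 0.
Proof.
move=> s_gt0 s_lt; rewrite -(pmulr_rlt0 _ P_gt0) last_pivot_factor ?gt_eqF //.
by rewrite nmulr_rlt0 ?other_factor_gt0 // subr_lt0 mulrC -ltr_pdivlMr.
Qed.

Lemma last_pivot_gt0 s : pivot_root / P < s -> 0 < last_pivot p h s.
Proof.
move=> s_gt; have s_gt0 : 0 < s.
  by rewrite (lt_trans _ s_gt) ?divr_gt0 ?pivot_root_gt0.
rewrite -(pmulr_rgt0 _ P_gt0) last_pivot_factor ?gt_eqF //.
by rewrite mulr_gt0 ?other_factor_gt0 // subr_gt0 mulrC -ltr_pdivrMr.
Qed.

End PivotSign.

Lemma exists_int_between (R : archiRealDomainType) (a b : R) :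
  a + 1 < b -> exists2 k : int, a < k%:~R & k%:~R < b.
Proof.
move=> ab; exists (Num.floor a + 1); first exact: floorD1_gt.
by rewrite intrD (le_lt_trans _ ab) // lerD2r floor_le.
Qed.

(* With d := 1/s1 - 1/s2 and h > 1/(2d), the root g := pivot_root h exceeds
   2h, so the interval (g/s2, g/s1) has length g d > 1 and contains some p. *)
Lemma exists_pivot_root_between (R : archiRcfType) (s1 s2 : R) :
  0 < s1 -> s1 < s2 -> exists p h : int, (0 < p)%R /\ s1 < pivot_root R h / p%:~R < s2.
Proof.
move=> s1_gt0 s12; have s2_gt0 := lt_trans s1_gt0 s12.
pose d := s1^-1 - s2^-1; have d_gt0 : 0 < d by rewrite subr_gt0 ltf_pV2 ?posrE.
have [h h_gt _] : exists2 h : int, (2 * d)^-1 < h%:~R & h%:~R < (2 * d)^-1 + 2.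
  by apply: exists_int_between; rewrite ltrD2l ltr1n.
pose g := pivot_root R h; have g_gt0 : 0 < g := pivot_root_gt0 R h.
have hd_gt : 1 < 2 * h%:~R * d by rewrite mulrAC -ltr_pdivrMl ?mulr_gt0 // mulr1.
have gd_gt : 1 < g * d.
  by rewrite (lt_trans hd_gt) // ltr_pM2r // pivot_root_gt_double.
have [p p_gt p_lt] : exists2 p : int, g / s2 < p%:~R & p%:~R < g / s1.
  by apply: exists_int_between; move: gd_gt; rewrite /d mulrBr; lra.
have p_gt0 : 0 < p%:~R :> R by rewrite (lt_trans _ p_gt) ?divr_gt0.
exists p, h; split; first by rewrite -(ltr0z R).
rewrite ltr_pdivlMr // ltr_pdivrMr // -/g mulrC -ltr_pdivlMr // mulrC.
by rewrite -ltr_pdivrMl // ![_^-1 * g]mulrC p_gt p_lt.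
Qed.

(** * Independence of families of step functions *)

Lemma exists_seq_argmax (T : eqType) (d : Order.disp_t) (O : orderType d)
    (f : T -> O) (s : seq T) :
  s != [::] -> exists2 x, x \in s & forall y, y \in s -> (f y <= f x)%O.
Proof.
elim: s => [//|a s IH] _; have [->|/IH[x xs x_max]] := eqVneq s [::].
  by exists a; rewrite ?mem_head // => y; rewrite inE => /eqP->.
have [fax|fxa] := leP (f a) (f x).
  by exists x; rewrite ?inE ?xs ?orbT // => y /predU1P[->|/x_max].
exists a; rewrite ?mem_head // => y /predU1P[->//|/x_max fyx].
exact: le_trans fyx (ltW fxa).
Qed.

(* The coefficient of the t with largest key among those with c t != 0 is
   isolated by a step between that key and all the smaller ones. *)
Lemma step_family_lin_indep (R : realFieldType) (T : eqType) (X : Type)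
    (ok : X -> Prop) (f : T -> X -> R) (key : T -> R) (s : seq T) (c : T -> R) :
  uniq s -> {in s &, injective key} -> (forall t, t \in s -> 0 < key t) ->
  (forall s1 s2, 0 < s1 -> s1 < s2 -> exists2 x, ok x &
     forall t, t \in s -> (key t <= s1 -> f t x = 0) /\ (s2 <= key t -> f t x != 0)) ->
  (forall x, ok x -> \sum_(t <- s) c t * f t x = 0) ->
  forall t, t \in s -> c t = 0.
Proof.
move=> s_uniq key_inj key_gt0 step sum0 t0 t0s; apply/eqP/contraT => ct0.
pose S := [seq t <- s | c t != 0].
have t0S : t0 \in S by rewrite mem_filter ct0.
have [|tm] := exists_seq_argmax key (s := S); first by apply: contraTneq t0S => ->.
rewrite mem_filter => /andP[ctm tms] tm_max; have km_gt0 := key_gt0 _ tms.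
pose s1 := \big[Num.max/key tm / 2]_(t <- S | t != tm) key t.
have s1_gt0 : 0 < s1 by rewrite (lt_le_trans _ (bigmax_ge_id _ _ _ _)) ?divr_gt0.
have s1_lt : s1 < key tm.
  rewrite /s1 big_seq_cond; apply: (big_ind (fun y => y < key tm)) => //.
  - by rewrite ltr_pdivrMr // ltr_pMr // ltr1n.
  - by move=> y z yl zl; rewrite gt_max yl zl.
  move=> t /andP[tS t_neq]; rewrite lt_neqAle tm_max // andbT.
  move: tS; rewrite mem_filter => /andP[_ ts].
  by apply: contra t_neq => /eqP/(key_inj _ _ ts tms)->.
have [x okx fx] := step s1 (key tm) s1_gt0 s1_lt.
move: (sum0 x okx); rewrite (bigD1_seq tm) //= big1_seq => [|t /andP[t_neq ts]].
  by rewrite addr0 => /eqP; rewrite mulf_eq0 (negPf ctm) (negPf (proj2 (fx _ tms) _)).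
have [->|ct] := eqVneq (c t) 0; first by rewrite mul0r.
rewrite (proj1 (fx t ts)) ?mulr0 //; apply: le_bigmax_seq => //.
by rewrite mem_filter ct ts.
Qed.

Lemma test_seifert_lin_indep (R : archiRcfType) (T : eqType)
    (f : T -> forall n, 'M[int]_n -> R) (key : T -> R) (s : seq T) (c : T -> R) :
  uniq s -> {in s &, injective key} -> (forall t, t \in s -> 0 < key t) ->
  (forall t p h, t \in s -> (0 < p)%R -> last_pivot p h (key t) != 0 ->
     f t 4 (test_seifert p h) = if 0 < last_pivot p h (key t) then 2 else 0) ->
  (forall n (V : 'M[int]_n), is_seifert V -> \sum_(t <- s) c t * f t n V = 0) ->
  forall t, t \in s -> c t = 0.
Proof.
move=> s_uniq key_inj key_gt0 f_test sum0.
apply: (@step_family_lin_indep _ _ {n & 'M[int]_n} (fun x => is_seifert (projT2 x))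
  (fun t x => f t _ (projT2 x)) key s c s_uniq key_inj key_gt0); last first.
  by case=> n V; exact: sum0.
move=> s1 s2 s1_gt0 s12.
have [p [h [p_gt0 /andP[root_gt root_lt]]]] := exists_pivot_root_between s1_gt0 s12.
exists (existT _ 4 (test_seifert p h)); first exact: test_seifert_is_seifert.
move=> t ts; have kt_gt0 := key_gt0 t ts; split=> kt /=.
  have l_lt0 : last_pivot p h (key t) < 0.
    by apply: last_pivot_lt0 => //; apply: le_lt_trans kt root_gt.
  by rewrite f_test ?ltr0_neq0 // (lt_gtF l_lt0).
have l_gt0 : 0 < last_pivot p h (key t).
  by apply: last_pivot_gt0 => //; apply: lt_le_trans root_lt kt.
by rewrite f_test ?lt0r_neq0 // l_gt0 ltr0n.
Qed.

(** * Signatures on the unit circle *)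

Section Signatures.
Variable R : realType.
Local Notation toC := (real_complex R).

Lemma sigma_omega_test_seifert (w : R[i]) (p h : int) :
  w * w^* = 1 -> complex.Re w < 1 -> (0 < p)%R ->
  last_pivot p h (2 - 2 * complex.Re w) != 0 ->
  sigma_omega w (test_seifert p h)
  = if 0 < last_pivot p h (2 - 2 * complex.Re w) then 2 else 0.
Proof.
move=> ww Re_lt1 p_gt0 l_neq0; set u := 1 - w.
have conj_u : 1 - w^* = u^* by rewrite rmorphB rmorph1.
have s_def : u + u^* = toC (2 - 2 * complex.Re w).
  rewrite -conj_u /u; case: w {ww Re_lt1 l_neq0 u conj_u} => a b.
  by apply/eqP; rewrite eq_complex /=; apply/andP; split; apply/eqP; ring.
have uu : u * u^* = u + u^* by rewrite -conj_u /u mulrBr !mulrBl ww; ring.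
have u_neq0 : u != 0.
  by apply: contraTneq Re_lt1 => /eqP; rewrite subr_eq0 => /eqP <-; rewrite ltxx.
have := test_form_signature (h := h) u_neq0 uu p_gt0.
rewrite s_def -(rmorph_last_pivot toC) (inj_eq (fmorph_inj _)) (ltcR 0).
by move=> /(_ l_neq0); rewrite /sigma_omega /hsignature conj_u.
Qed.

Lemma in_S_coord (a b : R) : in_S (a +i* b)%C -> a ^+ 2 + b ^+ 2 = 1 /\ 0 < b.
Proof.
case=> /eqP; rewrite normc_def /= eq_complex /= eqxx andbT => /eqP norm1 Im_gt0.
split; last by move: Im_gt0; rewrite -complexIm (ltcR 0).
by rewrite -[LHS]sqr_sqrtr ?norm1 ?expr1n // addr_ge0 // sqr_ge0.
Qed.

Lemma in_S_unit (w : R[i]) : in_S w -> w * w^* = 1.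
Proof. by case=> w1 _; rewrite -normCK w1 expr1n. Qed.

Lemma in_S_Re_lt1 (w : R[i]) : in_S w -> complex.Re w < 1.
Proof. by case: w => a b /in_S_coord[ab1 b_gt0] /=; nra. Qed.

Lemma in_S_Re_inj (w1 w2 : R[i]) :
  in_S w1 -> in_S w2 -> complex.Re w1 = complex.Re w2 -> w1 = w2.
Proof.
case: w1 w2 => [a1 b1] [a2 b2] /in_S_coord[e1 b1_gt0] /in_S_coord[e2 b2_gt0] /= a12.
suff : b1 = b2 by move=> <-; rewrite a12.
apply/eqP; rewrite -(eqrXn2 (n := 2)) ?ltW //; apply/eqP.
by rewrite -[LHS](addKr (a1 ^+ 2)) e1 a12 -e2 addKr.
Qed.

Lemma signature_functions_lin_indep (s : seq R[i]) (c : R[i] -> R) :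
  uniq s -> (forall w, w \in s -> in_S w) ->
  (forall n (V : 'M[int]_n), is_seifert V ->
     \sum_(w <- s) c w * (sigma_omega w V)%:~R = 0) ->
  forall w, w \in s -> c w = 0.
Proof.
move=> s_uniq sS; apply: (@test_seifert_lin_indep R _ (fun w n V => (sigma_omega w V)%:~R)
  (fun w => 2 - 2 * complex.Re w) s c s_uniq).
- by move=> w1 w2 /sS S1 /sS S2 /= e12; apply: in_S_Re_inj S1 S2 _; lra.
- by move=> w /sS /in_S_Re_lt1; lra.
move=> w p h /sS Sw p_gt0 l_neq0.
by rewrite sigma_omega_test_seifert ?in_S_unit ?in_S_Re_lt1 //; case: ifP.
Qed.

End Signatures.

Section AveragedSignatures.
Variable R : realType.
Local Open Scope classical_set_scope.

Lemma expi_unit (t : R) : expi t * (expi t)^* = 1.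
Proof.
by apply/eqP; rewrite eq_complex /= -(cos2Dsin2 t); apply/andP; split; apply/eqP; ring.
Qed.

Lemma cvg_chord_cos (t : R) : (fun x => 2 - 2 * cos x) @ t --> 2 - 2 * cos t.
Proof.
by apply: cvgB; [exact: cvg_cst | apply: cvgM; [exact: cvg_cst | exact: continuous_cos]].
Qed.

Lemma cvg_last_pivot_cos (p h : int) (t : R) :
  (fun x => last_pivot p h (2 - 2 * cos x)) @ t --> last_pivot p h (2 - 2 * cos t).
Proof.
rewrite /last_pivot; apply: cvgB; [apply: cvgB; apply: cvgM | exact: cvg_cst].
- exact: cvg_cst.
- by rewrite expr2; under eq_fun do rewrite expr2; apply: cvgM; exact: cvg_chord_cos.
- exact: cvg_cst.
- exact: cvg_chord_cos.
Qed.

Lemma near_sign_cvg (T : Type) (F : set_system T) {FF : Filter F} (g : T -> R) l :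
  g @ F --> l -> l != 0 -> \forall x \near F, g x != 0 /\ (0 < g x) = (0 < l).
Proof.
move=> gl; rewrite real_neqr_lt ?num_real // => /orP[l_lt0|l_gt0]; near=> x.
  have gx_lt0 : g x < 0 by near: x; exact: cvgr_lt gl _ l_lt0.
  by rewrite lt_eqF // !(lt_gtF gx_lt0, lt_gtF l_lt0).
have gx_gt0 : 0 < g x by near: x; exact: cvgr_gt gl _ l_gt0.
by rewrite gt_eqF // gx_gt0 l_gt0.
Unshelve. all: by end_near.
Qed.

Lemma avg_sigma_near_const (t k : R) n (V : 'M[int]_n) :
  (\forall x \near t, sigma_theta V x = k) -> avg_sigma t V = k.
Proof.
move=> Vk; rewrite /avg_sigma !(@lim_near_cst _ _ _ _ _ k) //; first by field.
all: exact: cvg_within Vk.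
Qed.

Lemma avg_sigma_test_seifert (t : R) (p h : int) :
  (0 < p)%R -> 0 < 2 - 2 * cos t -> last_pivot p h (2 - 2 * cos t) != 0 ->
  avg_sigma t (test_seifert p h) = if 0 < last_pivot p h (2 - 2 * cos t) then 2 else 0.
Proof.
move=> p_gt0 key_gt0 l_neq0; apply: avg_sigma_near_const; near=> x.
have [lx_neq0 lx_sign] : last_pivot p h (2 - 2 * cos x) != 0 /\
    (0 < last_pivot p h (2 - 2 * cos x)) = (0 < last_pivot p h (2 - 2 * cos t)).
  by near: x; exact: near_sign_cvg (@cvg_last_pivot_cos p h t) l_neq0.
have kx_gt0 : 0 < 2 - 2 * cos x by near: x; exact: cvgr_gt (@cvg_chord_cos t) _ key_gt0.
rewrite /sigma_theta sigma_omega_test_seifert ?expi_unit //= ?lx_sign; first by case: ifP.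
lra.
Unshelve. all: by end_near.
Qed.

Lemma cos_lt1 (t : R) : 0 < t < pi -> cos t < 1.
Proof.
case/andP=> t_gt0 t_lt; rewrite -cos0 ltr_cos ?in_itv /= ?lexx ?pi_ge0 //.
by rewrite !ltW.
Qed.

Lemma averaged_signature_functions_lin_indep (s : seq R) (c : R -> R) :
  uniq s -> (forall t, t \in s -> 0 < t < pi) ->
  (forall n (V : 'M[int]_n), is_seifert V ->
     \sum_(t <- s) c t * avg_sigma t V = 0) ->
  forall t, t \in s -> c t = 0.
Proof.
move=> s_uniq s_in; apply: (@test_seifert_lin_indep R _ (fun t n V => avg_sigma t V)
  (fun t => 2 - 2 * cos t) s c s_uniq).
- move=> t1 t2 /s_in /andP[t1_gt0 t1_lt] /s_in /andP[t2_gt0 t2_lt] /= e12.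
  by apply: cos_inj; rewrite ?in_itv /= ?ltW //; lra.
- by move=> t /s_in /cos_lt1; lra.
move=> t p h /s_in /cos_lt1 cos_t_lt1 p_gt0 l_neq0.
by apply: avg_sigma_test_seifert => //; lra.
Qed.

End AveragedSignatures.

Theorem mainTheorem4 (R : realType) :
  (* (a) the functions sigma_omega, omega in S, are linearly independent
     (over R) as real-valued functions of the Seifert matrix *)
  (forall (s : seq R[i]) (c : R[i] -> R),
      uniq s -> (forall w, w \in s -> in_S w) ->
      (forall (n : nat) (V : 'M[int]_n), is_seifert V ->
         \sum_(w <- s) c w * (sigma_omega w V)%:~R = 0) ->
      forall w, w \in s -> c w = 0) /\
  (* (b) the averaged signatures sigma*_{e^{i theta}}, theta in (0, pi)
     (i.e. e^{i theta} in S), are linearly independent as functions on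
     Seifert matrices, hence on the algebraic concordance group *)
  (forall (s : seq R) (c : R -> R),
      uniq s -> (forall t, t \in s -> 0 < t < pi) ->
      (forall (n : nat) (V : 'M[int]_n), is_seifert V ->
         \sum_(t <- s) c t * avg_sigma t V = 0) ->
      forall t, t \in s -> c t = 0).
Proof.
split; [exact: signature_functions_lin_indep | exact: averaged_signature_functions_lin_indep].
Qed.
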